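(* Let $N,n,q\ge1$, let $A\in\mathbb{R}^{n\times n}$, $B_v\in\mathbb{R}^{n\times q}$, $G\in\mathbb{R}^{q\times n}$, $B_u\in\mathbb{R}^{n\times 1}$, $C\in\mathbb{R}^{1\times n}$ and $M\in\mathbb{R}^{N\times N}$, and suppose $K:=(I_N\otimes A)+M\otimes(B_vG)$ is invertible. Define the linear map $L:\mathbb{R}^N\to\mathbb{R}^N$ by $$L\tilde u=-(I_N\otimes C)\,K^{-1}\,(I_N\otimes B_u)\,\tilde u$$ (the steady-state input-to-readout map of the linear system $\dot{\tilde x}=K\tilde x+(I_N\otimes B_u)\tilde u$, $\tilde y=(I_N\otimes C)\tilde x$). If $\Pi\in\mathbb{R}^{N\times N}$ is invertible and $\Pi M=M\Pi$, then $L\Pi=\Pi L$, i.e. for every $\tilde u\in\mathbb{R}^N$, $L(\Pi\tilde u)=\Pi(L\tilde u)$.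
   Context: $\otimes$ denotes the Kronecker product and $I_m$ the $m\times m$ identity matrix. In the paper's setting, this describes a network of $N$ identical cells linearized about a homogeneous steady state, with $M$ the interconnection matrix. *)

From mathcomp Require Import all_boot all_order all_algebra.
From mathcomp Require Export mxtens.
From mathcomp Require Import reals.
Set Implicit Arguments. Unset Strict Implicit. Unset Printing Implicit Defensive.
Import GRing.Theory Num.Theory.
Local Open Scope ring_scope.

Definition Kmat (R : realType) (N n q : nat) (A : 'M[R]_n) (Bv : 'M[R]_(n, q))
  (G : 'M[R]_(q, n)) (M : 'M[R]_N) : 'M[R]_(N * n) :=
  (1%:M *t A) + (M *t (Bv *m G)).

(* L u := - (I_N (x) C) K^{-1} (I_N (x) Bu) u, acting on column vectors in R^N;
   the dimension N*1 of I_N (x) Bu / I_N (x) C is identified with N by castmx. *)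
Definition Lmap (R : realType) (N n q : nat) (A : 'M[R]_n) (Bv : 'M[R]_(n, q))
  (G : 'M[R]_(q, n)) (Bu : 'M[R]_(n, 1)) (C : 'M[R]_(1, n)) (M : 'M[R]_N)
  (u : 'cV[R]_N) : 'cV[R]_N :=
  castmx (muln1 N, erefl 1%N)
   (- (((1%:M : 'M[R]_N) *t C) *m invmx (Kmat A Bv G M)
       *m ((1%:M : 'M[R]_N) *t Bu) *m castmx (esym (muln1 N), erefl 1%N) u)).

From mathcomp Require Import all_boot all_order all_algebra.
From mathcomp Require Import mxtens reals.
Set Implicit Arguments. Unset Strict Implicit. Unset Printing Implicit Defensive.
Import GRing.Theory.
Local Open Scope ring_scope.

(* With P := Pi (x) I_n, the mixed-product rule gives P K = K P, hence
   P K^-1 = K^-1 P, as well as (I_N (x) C) P = Pi' (I_N (x) C) and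
   (I_N (x) Bu) Pi' = P (I_N (x) Bu) for Pi' := Pi (x) I_1, which is Pi up to
   the identification N * 1 = N. *)

Lemma castmx_mulmx (R : pzRingType) m m' n n' p p' (em : m = m') (en : n = n')
  (ep : p = p') (X : 'M[R]_(m, n)) (Y : 'M[R]_(n, p)) :
  castmx (em, en) X *m castmx (en, ep) Y = castmx (em, ep) (X *m Y).
Proof. by case: m' / em; case: n' / en; case: p' / ep; rewrite !castmx_id. Qed.

Lemma comm_mx_invmx (R : comUnitRingType) n (P K : 'M[R]_n) :
  K \in unitmx -> comm_mx P K -> comm_mx P (invmx K).
Proof.
move=> Kunit PK; rewrite /comm_mx.
rewrite -[LHS]mul1mx -(mulVmx Kunit) -mulmxA (mulmxA K) -PK.
by rewrite -!mulmxA mulmxV // mulmx1.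
Qed.

Lemma mulmx3_intertwine (R : pzRingType) m n p (X : 'M[R]_(m, n)) (Y : 'M[R]_n)
  (Z : 'M[R]_(n, p)) (Pm : 'M[R]_m) (Pn : 'M[R]_n) (Pp : 'M[R]_p) :
  X *m Pn = Pm *m X -> comm_mx Pn Y -> Z *m Pp = Pn *m Z ->
  X *m Y *m Z *m Pp = Pm *m (X *m Y *m Z).
Proof. by move=> hX hY hZ; rewrite -!mulmxA hZ !mulmxA -(mulmxA X) -hY mulmxA hX. Qed.

Section TensorWithIdentity.
Variables (R : comPzRingType) (N : nat).

Lemma tensmx1_intertwine m n (Pi : 'M[R]_N) (X : 'M[R]_(m, n)) :
  (1%:M *t X) *m (Pi *t 1%:M) = (Pi *t 1%:M) *m (1%:M *t X).
Proof. by rewrite !tensmx_mul !mul1mx !mulmx1. Qed.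

Lemma comm_mx_tensmx1 n (Pi M : 'M[R]_N) (X : 'M[R]_n) :
  comm_mx Pi M -> comm_mx (Pi *t 1%:M) (M *t X).
Proof. by rewrite /comm_mx !tensmx_mul mulmx1 mul1mx => ->. Qed.

Lemma tens_mx1 (Pi : 'M[R]_N) :
  Pi *t (1%:M : 'M[R]_1) = castmx (esym (muln1 N), esym (muln1 N)) Pi.
Proof. by rewrite tens_mx_scalar scale1r. Qed.

End TensorWithIdentity.

Lemma comm_mx_Kmat (R : realType) N n q (A : 'M[R]_n) (Bv : 'M[R]_(n, q))
  (G : 'M[R]_(q, n)) (M Pi : 'M[R]_N) :
  comm_mx Pi M -> comm_mx (Pi *t 1%:M) (Kmat A Bv G M).
Proof.
by move=> PiM; apply: comm_mxD; apply: comm_mx_tensmx1; [apply: comm_mx1 | ].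
Qed.

Theorem mainTheorem2 (R : realType) (N n q : nat)
  (hN : (1 <= N)%N) (hn : (1 <= n)%N) (hq : (1 <= q)%N)
  (A : 'M[R]_n) (Bv : 'M[R]_(n, q)) (G : 'M[R]_(q, n))
  (Bu : 'M[R]_(n, 1)) (C : 'M[R]_(1, n)) (M : 'M[R]_N)
  (hK : Kmat A Bv G M \in unitmx)
  (Pi : 'M[R]_N) (hPi : Pi \in unitmx) (hPM : Pi *m M = M *m Pi) :
  forall u : 'cV[R]_N, Lmap A Bv G Bu C M (Pi *m u) = Pi *m Lmap A Bv G Bu C M u.
Proof.
move=> u; rewrite /Lmap.
set e := muln1 N.
have transfer_comm :=
  mulmx3_intertwine (tensmx1_intertwine Pi C)
    (comm_mx_invmx hK (comm_mx_Kmat A Bv G hPM))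
    (tensmx1_intertwine Pi Bu).
have castPi : Pi = castmx (e, e) (Pi *t 1%:M) by rewrite tens_mx1 castmxKV.
rewrite castPi -[castmx (esym e, _) (_ *m u)](castmx_mulmx (esym e) (esym e)).
rewrite castmxK !mulmxA transfer_comm -!mulmxA -mulmxN.
by rewrite castmx_mulmx.
Qed.
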